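(* Let $Q$ be a right Leibniz algebra and $L$ a subalgebra of $Q$. (1) If $\mathrm{Ann}(L)=\{0\}$, then $L$ is an algebra of quotients of itself. (2) If $Q$ is an algebra of quotients of $L$, then $\mathrm{Ann}_Q(L)=\mathrm{Ann}(L)=\{0\}$.
   Context: A right Leibniz algebra satisfies $[x,[y,z]]=[[x,y],z]-[[x,z],y]$. $\mathrm{Ann}_Q(L)=\{q\in Q:[q,x]=[x,q]=0\ \forall x\in L\}$ and $\mathrm{Ann}(L)=\{x\in L:[x,y]=[y,x]=0\ \forall y\in L\}$. For $x\in L$, $R_x(u)=[u,x]$, $L_x(u)=[x,u]$ on $Q$, $\mathscr{A}(L)$ the associative algebra they generate, ${}_L(q)=\mathbb{F}q+\{\sum\xi_i(q):\xi_i\in\mathscr{A}(L)\}$, $(L:q)=\{x\in L:[x,{}_L(q)]\subseteq L,[{}_L(q),x]\subseteq L\}$. $Q$ is an algebra of quotients of $L$ if for all $p,q\in Q$ with $p\ne0$ there is $x\in(L:q)$ with $[x,p]\ne0$ or $y\in(L:q)$ with $[p,y]\ne0$. *)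

From mathcomp Require Import all_boot all_algebra.
Set Implicit Arguments. Unset Strict Implicit. Unset Printing Implicit Defensive.
Import GRing.Theory.
Local Open Scope ring_scope.

(* list membership for types without decidable equality *)
Fixpoint inseq (T : Type) (x : T) (s : seq T) : Prop :=
  if s is y :: s' then y = x \/ inseq x s' else False.

Section Leibniz.
Variables (F : fieldType) (Q : lmodType F) (br : Q -> Q -> Q).

Definition bilinear_br : Prop :=
  (forall a x y z, br (a *: x + y) z = a *: br x z + br y z) /\
  (forall a x y z, br x (a *: y + z) = a *: br x y + br x z).

Definition right_leibniz : Prop :=
  forall x y z, br x (br y z) = br (br x y) z - br (br x z) y.

Definition right_leibniz_algebra : Prop := bilinear_br /\ right_leibniz.

Definition subalgebra (L : Q -> Prop) : Prop :=
  [/\ L 0, (forall a x y, L x -> L y -> L (a *: x + y))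
    & (forall x y, L x -> L y -> L (br x y))].

(* A(L): the (non-unital) associative algebra of maps Q -> Q generated by
   the R_x : u |-> [u,x] and L_x : u |-> [x,u], x in L *)
Inductive multAlg (L : Q -> Prop) : (Q -> Q) -> Prop :=
  | mA_R x : L x -> multAlg L (fun u => br u x)
  | mA_L x : L x -> multAlg L (fun u => br x u)
  | mA_add f g : multAlg L f -> multAlg L g -> multAlg L (fun u => f u + g u)
  | mA_scale (a : F) f : multAlg L f -> multAlg L (fun u => a *: f u)
  | mA_comp f g : multAlg L f -> multAlg L g -> multAlg L (fun u => f (g u)).

Definition idealL (L : Q -> Prop) (q : Q) : Q -> Prop :=
  fun y => exists (a : F) (s : seq (Q -> Q)),
    (forall xi, inseq xi s -> multAlg L xi) /\
    y = a *: q + \sum_(xi <- s) xi q.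

Definition colon (L : Q -> Prop) (q : Q) : Q -> Prop :=
  fun x => L x /\ forall y, idealL L q y -> L (br x y) /\ L (br y x).

(* M (a subalgebra of Q containing L, taken as ambient algebra)
   is an algebra of quotients of L *)
Definition algebra_of_quotients_in (M L : Q -> Prop) : Prop :=
  forall p q, M p -> M q -> p <> 0 ->
    (exists x, colon L q x /\ br x p <> 0) \/
    (exists y, colon L q y /\ br p y <> 0).

Definition algebra_of_quotients (L : Q -> Prop) : Prop :=
  algebra_of_quotients_in (fun _ => True) L.

Definition AnnQ (L : Q -> Prop) : Q -> Prop :=
  fun q => forall x, L x -> br q x = 0 /\ br x q = 0.

Definition Ann (L : Q -> Prop) : Q -> Prop :=
  fun x => L x /\ forall y, L y -> br x y = 0 /\ br y x = 0.

End Leibniz.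

From mathcomp Require Import all_boot all_algebra.
From Stdlib Require Import Classical.
Set Implicit Arguments. Unset Strict Implicit.
Local Open Scope ring_scope.
Import GRing.Theory.

Section Bracket.
Variables (F : fieldType) (Q : lmodType F) (br : Q -> Q -> Q).
Hypothesis br_bilinear : bilinear_br br.

Lemma br0l z : br 0 z = 0.
Proof.
have [brDl _] := br_bilinear.
have := brDl 1 0 0 z; rewrite !scale1r addr0 -{1}[br 0 z]addr0.
by move/addrI/esym.
Qed.

Lemma br0r z : br z 0 = 0.
Proof.
have [_ brDr] := br_bilinear.
have := brDr 1 z 0 0; rewrite !scale1r addr0 -{1}[br z 0]addr0.
by move/addrI/esym.
Qed.

Variables (L : Q -> Prop).
Hypothesis L_subalgebra : subalgebra br L.

Lemma subalgebraD x y : L x -> L y -> L (x + y).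
Proof. by have [_ LD _] := L_subalgebra => Lx Ly; rewrite -[x]scale1r; apply: LD. Qed.

Lemma subalgebraZ a x : L x -> L (a *: x).
Proof. by have [L0 LD _] := L_subalgebra => Lx; rewrite -[_ *: x]addr0; apply: LD. Qed.

Lemma multAlg_stable f : multAlg br L f -> forall u, L u -> L (f u).
Proof.
have [_ _ Lbr] := L_subalgebra.
elim=> [x Lx u Lu|x Lx u Lu|f1 f2 _ IH1 _ IH2 u Lu|a f1 _ IH u Lu|f1 f2 _ IH1 _ IH2 u Lu].
- exact: Lbr.
- exact: Lbr.
- by apply: subalgebraD; [apply: IH1|apply: IH2].
- by apply: subalgebraZ; apply: IH.
- by apply: IH1; apply: IH2.
Qed.

Lemma idealL_sub q y : L q -> idealL br L q y -> L y.
Proof.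
have [L0 _ _] := L_subalgebra.
move=> Lq [a [s [s_multAlg ->]]]; apply: subalgebraD; first exact: subalgebraZ.
elim: s s_multAlg => [|xi s IH] s_multAlg; first by rewrite big_nil.
rewrite big_cons; apply: subalgebraD.
- by apply: multAlg_stable => //; apply: s_multAlg; left.
- by apply: IH => xi' s_xi'; apply: s_multAlg; right.
Qed.

Lemma colon_subalgebra q y : L q -> L y -> colon br L q y.
Proof.
have [_ _ Lbr] := L_subalgebra.
move=> Lq Ly; split=> // z /(idealL_sub Lq) Lz.
by split; apply: Lbr.
Qed.

Lemma Ann0 : Ann br L 0.
Proof. by have [L0 _ _] := L_subalgebra; split=> // y _; rewrite br0l br0r. Qed.

Lemma AnnQ0 : AnnQ br L 0.
Proof. by move=> x _; rewrite br0l br0r. Qed.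

Lemma Ann_AnnQ x : Ann br L x -> AnnQ br L x.
Proof. by case=> _ annx y /annx. Qed.

Lemma algebra_of_quotients_self :
  (forall x, Ann br L x -> x = 0) -> algebra_of_quotients_in br L L.
Proof.
move=> Ann_eq0 p q Lp Lq p_neq0; apply: NNPP => no_witness.
apply/p_neq0/Ann_eq0; split=> // y Ly.
have y_colon := colon_subalgebra Lq Ly.
split; apply: NNPP => br_neq0; apply: no_witness.
- by right; exists y.
- by left; exists y.
Qed.

Lemma AnnQ_eq0 : algebra_of_quotients br L -> forall q, AnnQ br L q -> q = 0.
Proof.
move=> quotients q annq; have [//|q_neq0] := eqVneq q 0.
case: (quotients q q I I (elimN eqP q_neq0)) => [[x [[Lx _]]]|[y [[Ly _]]]].
- by case: (annq x Lx).
- by case: (annq y Ly).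
Qed.

End Bracket.

Theorem proposition3p3 (F : fieldType) (Q : lmodType F) (br : Q -> Q -> Q)
  (hQ : right_leibniz_algebra br) (L : Q -> Prop) (hL : subalgebra br L) :
  ((forall x, Ann br L x <-> x = 0) -> algebra_of_quotients_in br L L) /\
  (algebra_of_quotients br L ->
     (forall q, AnnQ br L q <-> q = 0) /\ (forall x, Ann br L x <-> x = 0)).
Proof.
have [bilin _] := hQ.
split=> [Ann_trivial|quotients].
  by apply: (algebra_of_quotients_self hL) => x /Ann_trivial.
have AnnQ_trivial q : AnnQ br L q <-> q = 0.
  by split=> [|->]; [exact: (AnnQ_eq0 quotients) | exact: (AnnQ0 bilin)].
split=> // x; split=> [/Ann_AnnQ /AnnQ_trivial //|->].
exact: (Ann0 bilin hL).
Qed.
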